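(* Let $\pi$ be a positive probability density on $\mathbb{R}^d$ with $\log\pi\in C^1(\mathbb{R}^d)$ and let $\mu_\sigma$ be a symmetric probability density on $\mathbb{R}^d$ ($\mu_\sigma(z)=\mu_\sigma(-z)$). Let $P^R$ be the Metropolis--Hastings kernel with target $\pi$ and candidate $y=x+z$, $z\sim\mu_\sigma$. Let $\check P^B$ be the Metropolis--Hastings kernel with target $\pi$ and candidate generated by drawing $z\sim\mu_\sigma$, setting $\check b=1$ with probability $\check p(x,z)=1/(1+e^{-z^T\nabla\log\pi(x)})$ and $\check b=-1$ otherwise, and proposing $y=x+\check b z$. Then $\mathrm{Gap}(P^R)\ge\mathrm{Gap}(\check P^B)/2$.
   Context: Metropolis--Hastings kernel with target $\pi$ and candidate density $q(x,y)$: propose $y\sim q(x,\cdot)$ and accept with probability $\min\{1,\pi(y)q(y,x)/(\pi(x)q(x,y))\}$, else stay. $\mathrm{Gap}(P)=\inf_{f\in L^2_{0,1}(\pi)}\frac12\int (f(y)-f(x))^2\pi(dx)P(x,dy)$ with $L^2_{0,1}(\pi)=\{f:\mathbb{E}_\pi f=0,\mathrm{Var}_\pi f=1\}$. *)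

(* R^d is represented by row vectors 'rV[R]_d. *)
From HB Require Import structures.
From mathcomp Require Import all_boot all_order all_algebra.
From mathcomp Require Import all_classical all_reals all_analysis.
Set Implicit Arguments. Unset Strict Implicit. Unset Printing Implicit Defensive.
Import Order.TTheory GRing.Theory Num.Theory.
Import numFieldNormedType.Exports.
Local Open Scope classical_set_scope.
Local Open Scope ring_scope.

Definition rV_display : measure_display. Proof. exact: default_measure_display. Qed.

Section measurable_rV.
Context (R : realType) (d : nat).
Definition rV_coord : 'I_d -> 'rV[R]_d -> R := fun i x => x ord0 i.

Let rV_set0 : g_sigma_preimage rV_coord set0.
Proof. exact: sigma_algebra0. Qed.
Let rV_setC A : g_sigma_preimage rV_coord A -> g_sigma_preimage rV_coord (~` A).
Proof. exact: sigma_algebraC. Qed.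
Let rV_bigcup (F : _^nat) : (forall i, g_sigma_preimage rV_coord (F i)) ->
  g_sigma_preimage rV_coord (\bigcup_i (F i)).
Proof. exact: sigma_algebra_bigcup. Qed.

(* the product (= Borel) sigma-algebra generated by the coordinates *)
HB.instance Definition _ := @isMeasurable.Build rV_display
  'rV[R]_d (g_sigma_preimage rV_coord) rV_set0 rV_setC rV_bigcup.
End measurable_rV.

Fixpoint lebesgue_rV (R : realType) (d : nat) : set 'rV[R]_d -> \bar R :=
  match d with
  | 0 => fun A => \d_(0 : 'rV[R]_0) A
  | d'.+1 => fun A =>
      ((@lebesgue_measure R) \x (@lebesgue_rV R d'))%E
        ((fun p : R * 'rV[R]_d' => (row_mx (\row_(j < 1) p.1) p.2 : 'rV[R]_d'.+1)) @^-1` A)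
  end.

Section MH.
Context (R : realType) (d : nat).
Local Notation Rd := 'rV[R]_d.
Local Notation leb := (@lebesgue_rV R d).

Definition prob_density (p : Rd -> R) : Prop :=
  [/\ measurable_fun setT p, (forall x, 0 <= p x) & (\int[leb]_x (p x)%:E = 1)%E].

Definition gradient (f : Rd -> R) (x : Rd) : Rd :=
  \row_(i < d) 'D_(delta_mx ord0 i : Rd) f x.

Definition dotp (u v : Rd) : R := \sum_(i < d) u ord0 i * v ord0 i.

Definition C1 (f : Rd -> R) : Prop :=
  (forall x, differentiable f x) /\ continuous (gradient f).

Definition mh_accept (pi : Rd -> R) (q : Rd -> Rd -> R) (x y : Rd) : R :=
  Num.min 1 ((pi y * q y x) / (pi x * q x y)).

Definition mh_kernel (pi : Rd -> R) (q : Rd -> Rd -> R) (x : Rd) (A : set Rd)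
  : \bar R :=
  ((\int[leb]_(y in A) (q x y * mh_accept pi q x y)%:E)
   + (1 - \int[leb]_y (q x y * mh_accept pi q x y)%:E) * (\1_A x)%:E)%E.

Definition Epi (pi : Rd -> R) (f : Rd -> R) : \bar R :=
  (\int[leb]_x (f x * pi x)%:E)%E.
Definition Varpi (pi : Rd -> R) (f : Rd -> R) : \bar R :=
  (\int[leb]_x (((f x - fine (Epi pi f)) ^+ 2) * pi x)%:E)%E.

Definition L2_01 (pi : Rd -> R) : set (Rd -> R) :=
  [set f | [/\ measurable_fun setT f, Epi pi f = 0%E & Varpi pi f = 1%E]].

Definition Gap (pi : Rd -> R) (P : Rd -> set Rd -> \bar R) : \bar R :=
  ereal_inf [set ((2^-1)%:E *
      \int[leb]_x ((pi x)%:E * \int[P x]_y ((f y - f x) ^+ 2)%:E))%E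
    | f in L2_01 pi].

Definition q_RW (mu : Rd -> R) (x y : Rd) : R := mu (y - x).

Definition p_check (pi : Rd -> R) (x z : Rd) : R :=
  1 / (1 + expR (- dotp z (gradient (fun u => ln (pi u)) x))).

(* density of y = x + b z, z ~ mu, b = 1 w.p. p_check(x,z), b = -1 otherwise:
   contribution of b = 1 (z = y - x) plus contribution of b = -1 (z = x - y) *)
Definition q_check (pi mu : Rd -> R) (x y : Rd) : R :=
  mu (y - x) * p_check pi x (y - x) + mu (x - y) * (1 - p_check pi x (x - y)).

End MH.

From HB Require Import structures.
From mathcomp Require Import all_boot all_order all_algebra.
From mathcomp Require Import all_classical all_reals all_analysis.
From mathcomp Require Import ring.
Import Order.TTheory GRing.Theory Num.Theory.
Import numFieldNormedType.Exports.
Local Open Scope classical_set_scope.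
Local Open Scope ring_scope.

(* Off the diagonal a Metropolis-Hastings kernel has density
   [min (q x y) (pi y * q y x / pi x)], which is monotone and positively
   homogeneous in the candidate density [q].  As [mu] is symmetric and the flip
   probability lies in [0, 1], [q_check pi mu x y <= mu (y - x) + mu (x - y)
   = 2 * q_RW mu x y], so the move density of the sign-flip kernel is at most
   twice that of the random walk.  The Dirichlet form ignores the diagonal,
   where [(f y - f x) ^+ 2] vanishes, hence it at most doubles as well, and
   taking infima over [L2_01 pi] gives the claim. *)

Set Implicit Arguments. Unset Strict Implicit. Unset Printing Implicit Defensive.

(* [mh_kernel pi q x] and [lebesgue_rV] are bare set functions, not
   [{measure _}] instances, so the library's integral lemmas do not apply to
   them; the lemmas below only assume that [mu set0 = 0]. *)

Section setfun_integral.
Local Open Scope ereal_scope.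
Context d (T : measurableType d) (R : realType).
Implicit Types (mu : set T -> \bar R) (f g : T -> \bar R) (D : set T).
Import HBNNSimple.

(* The library defines [integral mu D f] as [nnintegral mu (f \_ D)^\+ -
   nnintegral mu (f \_ D)^\-] with a section-local [nnintegral]. *)
Definition nnintegral mu f := ereal_sup [set sintegral mu h |
  h in [set h : {nnsfun T >-> R} | forall x, (h x)%:E <= f x]].

Lemma setfun_sintegralE mu (h : {nnsfun T >-> R}) : mu set0 = 0 ->
  sintegral mu h = \sum_(r \in range h) r%:E * mu (h @^-1` [set r]).
Proof.
move=> mu0; rewrite (fsbig_widen (range h) setT)//= => r [_ Nhr] /=.
by rewrite preimage10// mu0 mule0.
Qed.

Lemma nnintegral_ge0 mu f : mu set0 = 0 -> (forall x, 0 <= f x) ->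
  0 <= nnintegral mu f.
Proof.
move=> mu0 f0; apply: ereal_sup_ubound; exists nnsfun0 => //.
by rewrite setfun_sintegralE // fsbig1 // => _ [t _ <-]; rewrite mul0e.
Qed.

Lemma nnintegral0 mu : mu set0 = 0 -> nnintegral mu (cst 0) = 0.
Proof.
move=> mu0; apply/eqP; rewrite eq_le nnintegral_ge0 // andbT.
apply: ge_ereal_sup => _ [h /= h0 <-].
rewrite setfun_sintegralE // fsbig1 // => _ [t _ <-].
suff -> : h t = 0%R by rewrite mul0e.
by apply/eqP; rewrite eq_le fun_ge0 andbT -lee_fin.
Qed.

Lemma ge0_setfun_integralE mu D f : mu set0 = 0 -> (forall x, 0 <= f x) ->
  \int[mu]_(x in D) f x = nnintegral mu (f \_ D).
Proof.
move=> mu0 f0.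
have fD0 x : [set: T] x -> 0 <= (f \_ D) x by move=> _; exact: erestrict_ge0.
rewrite -[LHS]/(nnintegral mu (f \_ D)^\+ - nnintegral mu (f \_ D)^\-).
rewrite (_ : (f \_ D)^\- = cst 0); last first.
  by apply/funext => x; apply: (ge0_funenegE fD0); rewrite inE.
rewrite (_ : (f \_ D)^\+ = f \_ D) ?nnintegral0 ?sube0 //.
by apply/funext => x; apply: (ge0_funeposE fD0); rewrite inE.
Qed.

Lemma setfun_integral_ge0 mu D f : mu set0 = 0 -> (forall x, 0 <= f x) ->
  0 <= \int[mu]_(x in D) f x.
Proof.
move=> mu0 f0; rewrite ge0_setfun_integralE //.
by apply: nnintegral_ge0 => // x; exact: erestrict_ge0.
Qed.

Lemma setfun_integral_set0 mu f : mu set0 = 0 -> (forall x, 0 <= f x) ->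
  \int[mu]_(x in set0) f x = 0.
Proof.
by move=> mu0 f0; rewrite ge0_setfun_integralE // patch_set0 nnintegral0.
Qed.

Lemma setfun_sintegralrM mu (r : R) (h : {nnsfun T >-> R}) :
  mu set0 = 0 -> (forall A, 0 <= mu A) -> (0 < r)%R ->
  sintegral mu (cst r \* h)%R = r%:E * sintegral mu h.
Proof.
move=> mu0 mu_ge0 r_gt0; have r_neq0 : r != 0%R by rewrite gt_eqF.
have term_ge0 x : 0 <= x%:E * mu (h @^-1` [set x]).
  have [x_ge0|x_lt0] := leP 0%R x; first by rewrite mule_ge0.
  rewrite preimage10 ?mu0 ?mule0// => -[t _ htx].
  by move: x_lt0; rewrite -htx ltNge fun_ge0.
rewrite !sintegralET ge0_mule_fsumr // (reindex_fsbigT ( *%R r))/=; last first.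
  by exists ( *%R r^-1); [exact: mulKf | exact: mulVKf].
apply: eq_fsbigr => x; rewrite preimage_cstM // [(_ / r)%R]mulrC mulKf //.
by rewrite EFinM muleA.
Qed.

Lemma le_setfun_integralZ mu D f g (c : R) :
  mu set0 = 0 -> (forall A, 0 <= mu A) -> (0 < c)%R ->
  (forall x, 0 <= f x) -> (forall x, 0 <= g x) -> (forall x, f x <= c%:E * g x) ->
  \int[mu]_(x in D) f x <= c%:E * \int[mu]_(x in D) g x.
Proof.
move=> mu0 mu_ge0 c_gt0 f0 g0 fg; rewrite !ge0_setfun_integralE //.
apply: ge_ereal_sup => _ [h hf <-].
have cV_ge0 : (0 <= c^-1)%R by rewrite invr_ge0 ltW.
pose h' := scale_nnsfun h cV_ge0.
rewrite (@eq_sintegral _ _ _ _ (cst c \* h')%R h); last first.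
  by move=> t /=; rewrite mulrA divff ?gt_eqF // mul1r.
rewrite setfun_sintegralrM //; apply: lee_wpmul2l; first by rewrite lee_fin ltW.
apply: ereal_sup_ubound; exists h' => // t /=.
have fgD : (f \_ D) t <= c%:E * (g \_ D) t.
  by rewrite /patch; case: ifP => _; rewrite ?mule0.
have := lee_wpmul2l (_ : 0 <= c^-1%:E) (le_trans (hf t) fgD).
by rewrite lee_fin muleA -!EFinM mulVf ?gt_eqF // mul1e => /(_ cV_ge0).
Qed.

(* Only sets avoiding [x0] matter because [g] vanishes there: this is how the
   rejection mass of a Metropolis-Hastings kernel drops out. *)
Lemma le_setfun_integral_off (m1 m2 : set T -> \bar R) g (x0 : T) (c : R) :
  m1 set0 = 0 -> m2 set0 = 0 -> (0 <= c)%R ->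
  (forall x, 0 <= g x) -> g x0 = 0 ->
  (forall A, ~ A x0 -> 0 <= m2 A) -> (forall A, ~ A x0 -> m1 A <= c%:E * m2 A) ->
  \int[m1]_x g x <= c%:E * \int[m2]_x g x.
Proof.
move=> m10 m20 c_ge0 g0 gx0 m2_ge0 m12.
rewrite !ge0_setfun_integralE // patch_setT.
apply: ge_ereal_sup => _ [h hg <-].
have hx0 r : r != 0%R -> ~ (h @^-1` [set r]) x0.
  move=> + /= hx0r; rewrite -hx0r eq_le fun_ge0 andbT.
  by have := hg x0; rewrite gx0 lee_fin => ->.
have term_ge0 r : 0 <= r%:E * m2 (h @^-1` [set r]).
  have [->|r_neq0] := eqVneq r 0%R; first by rewrite mul0e.
  have [[t _ htr]|Nr] := pselect (range h r); last by rewrite preimage10 // m20 mule0.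
  by apply: mule_ge0; [rewrite lee_fin -htr fun_ge0 | exact/m2_ge0/hx0].
apply: (@le_trans _ _ (c%:E * sintegral m2 h)); last first.
  by apply: lee_wpmul2l; [rewrite lee_fin | apply: ereal_sup_ubound; exists h].
rewrite !setfun_sintegralE // ge0_mule_fsumr // lee_fsum // => r [t _ htr].
have [->|r_neq0] := eqVneq r 0%R; first by rewrite !mul0e mule0.
rewrite muleCA; apply: lee_wpmul2l; first by rewrite lee_fin -htr fun_ge0.
exact/m12/hx0.
Qed.

End setfun_integral.

Section dirichlet_form.
Local Open Scope ereal_scope.
Context d (T : measurableType d) (R : realType) (mu : set T -> \bar R).

Definition dirichlet (pi : T -> R) (P : T -> set T -> \bar R) (f : T -> R) :=
  \int[mu]_x ((pi x)%:E * \int[P x]_y ((f y - f x) ^+ 2)%:E).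

Hypotheses (mu0 : mu set0 = 0) (mu_ge0 : forall A, 0 <= mu A).

Lemma le_dirichlet pi (P1 P2 : T -> set T -> \bar R) f (c : R) :
  (forall x, 0 <= pi x)%R -> (0 < c)%R ->
  (forall x, P1 x set0 = 0) -> (forall x, P2 x set0 = 0) ->
  (forall x A, ~ A x -> 0 <= P2 x A) ->
  (forall x A, ~ A x -> P1 x A <= c%:E * P2 x A) ->
  dirichlet pi P1 f <= c%:E * dirichlet pi P2 f.
Proof.
move=> pi_ge0 c_gt0 P10 P20 P2_ge0 P12.
have sq_ge0 x y : 0 <= ((f y - f x) ^+ 2)%:E by rewrite lee_fin sqr_ge0.
have energy_ge0 (P : T -> set T -> \bar R) x : P x set0 = 0 ->
    0 <= (pi x)%:E * \int[P x]_y ((f y - f x) ^+ 2)%:E.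
  by move=> Px0; rewrite mule_ge0 ?lee_fin // setfun_integral_ge0.
apply: le_setfun_integralZ => // x; [exact: energy_ge0 | exact: energy_ge0 |].
rewrite muleCA; apply: lee_wpmul2l; first by rewrite lee_fin.
apply: (le_setfun_integral_off (x0 := x)) => //.
- exact: ltW.
- by rewrite subrr expr0n.
- exact: P2_ge0.
- exact: P12.
Qed.

End dirichlet_form.

Lemma le_Gap (R : realType) (d : nat) (pi : 'rV[R]_d -> R)
    (P1 P2 : 'rV[R]_d -> set 'rV[R]_d -> \bar R) (c : R) :
  0 < c ->
  (forall f, L2_01 pi f -> (dirichlet (@lebesgue_rV R d) pi P1 f
                           <= c%:E * dirichlet (@lebesgue_rV R d) pi P2 f)%E) ->
  ((c^-1)%:E * Gap pi P1 <= Gap pi P2)%E.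
Proof.
move=> c_gt0 le12; apply: le_ereal_inf_tmp => _ [f Lf <-].
have cV_ge0 : (0 <= (c^-1)%:E)%E by rewrite lee_fin invr_ge0 ltW.
have le_half : ((2^-1)%:E * dirichlet (@lebesgue_rV R d) pi P1 f
               <= c%:E * ((2^-1)%:E * dirichlet (@lebesgue_rV R d) pi P2 f))%E.
  by rewrite muleCA; apply: lee_wpmul2l; [rewrite lee_fin invr_ge0 | exact: le12].
apply: (@le_trans _ _ ((c^-1)%:E *
                       ((2^-1)%:E * dirichlet (@lebesgue_rV R d) pi P1 f))%E).
  by apply: lee_wpmul2l => //; apply: ereal_inf_lbound; exists f.
apply: le_trans (lee_wpmul2l cV_ge0 le_half) _.
by rewrite muleA -EFinM mulVf ?gt_eqF // mul1e.
Qed.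

Lemma lebesgue_rV_set0 (R : realType) (d : nat) : @lebesgue_rV R d set0 = 0%E.
Proof.
elim: d => [|d IH] /=; first by rewrite diracE in_set0.
rewrite /product_measure1 preimage_set0 (_ : (fun x => _) = cst 0%E) ?integral0 //.
by apply/funext => x /=; rewrite xsection0 IH.
Qed.

Lemma lebesgue_rV_ge0 (R : realType) (d : nat) (A : set 'rV[R]_d) :
  (0 <= @lebesgue_rV R d A)%E.
Proof.
elim: d A => [|d IH] A /=; first by rewrite diracE lee_fin.
by apply: integral_ge0 => x _; exact: IH.
Qed.

Section mh_comparison.
Context (R : realType) (d : nat).
Local Notation Rd := 'rV[R]_d.
Local Notation leb := (@lebesgue_rV R d).
Implicit Types (pi mu : Rd -> R) (q : Rd -> Rd -> R).

Definition mh_move_density pi q (x y : Rd) : R := q x y * mh_accept pi q x y.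

Lemma mh_kernel_notin pi q x A : ~ A x ->
  mh_kernel pi q x A = (\int[leb]_(y in A) (mh_move_density pi q x y)%:E)%E.
Proof. by move=> nAx; rewrite /mh_kernel indicE memNset // mule0 adde0. Qed.

Lemma mh_kernel_set0 pi q x : (forall y, 0 <= mh_move_density pi q x y) ->
  mh_kernel pi q x set0 = 0%E.
Proof.
move=> dens_ge0; rewrite mh_kernel_notin // setfun_integral_set0 //.
exact: lebesgue_rV_set0.
Qed.

Lemma mh_kernel_ge0 pi q x A : (forall y, 0 <= mh_move_density pi q x y) ->
  ~ A x -> (0 <= mh_kernel pi q x A)%E.
Proof.
move=> dens_ge0 nAx; rewrite mh_kernel_notin // setfun_integral_ge0 //.
exact: lebesgue_rV_set0.
Qed.

Lemma le_mh_kernel pi q1 q2 x A (c : R) : 0 < c ->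
  (forall y, 0 <= mh_move_density pi q1 x y) ->
  (forall y, 0 <= mh_move_density pi q2 x y) ->
  (forall y, mh_move_density pi q1 x y <= c * mh_move_density pi q2 x y) ->
  ~ A x -> (mh_kernel pi q1 x A <= c%:E * mh_kernel pi q2 x A)%E.
Proof.
move=> c_gt0 dens1_ge0 dens2_ge0 le_dens nAx; rewrite !mh_kernel_notin //.
apply: le_setfun_integralZ => //; [exact: lebesgue_rV_set0 | exact: lebesgue_rV_ge0].
Qed.

Variable pi : Rd -> R.
Hypothesis pi_gt0 : forall x, 0 < pi x.

Let ratio_ge0 q x y : 0 <= q y x -> 0 <= pi y * q y x / pi x.
Proof. by move=> qyx_ge0; rewrite divr_ge0 ?mulr_ge0 // ltW. Qed.

Lemma mh_move_densityE q x y : 0 <= q x y -> 0 <= q y x ->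
  mh_move_density pi q x y = Num.min (q x y) (pi y * q y x / pi x).
Proof.
move=> qxy_ge0 qyx_ge0; rewrite /mh_move_density /mh_accept.
have [->|qxy_neq0] := eqVneq (q x y) 0.
  by rewrite mul0r; apply/esym/min_idPl; exact: ratio_ge0.
rewrite minr_pMr // mulr1; congr (Num.min _ _).
by field; rewrite qxy_neq0 gt_eqF.
Qed.

Lemma mh_move_density_ge0 q x y : 0 <= q x y -> 0 <= q y x ->
  0 <= mh_move_density pi q x y.
Proof.
by move=> qxy_ge0 qyx_ge0; rewrite mh_move_densityE // le_min qxy_ge0 ratio_ge0.
Qed.

Lemma le_mh_move_density q1 q2 x y (c : R) : 0 <= c ->
  0 <= q1 x y -> 0 <= q1 y x -> 0 <= q2 x y -> 0 <= q2 y x ->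
  q1 x y <= c * q2 x y -> q1 y x <= c * q2 y x ->
  mh_move_density pi q1 x y <= c * mh_move_density pi q2 x y.
Proof.
move=> c_ge0 q1xy_ge0 q1yx_ge0 q2xy_ge0 q2yx_ge0 le_xy le_yx.
rewrite !mh_move_densityE // minr_pMr //; apply: le_min2 => //.
have -> : c * (pi y * q2 y x / pi x) = pi y * (c * q2 y x) / pi x by ring.
apply: ler_wpM2r; first by rewrite invr_ge0 ltW.
by apply: ler_wpM2l; first exact: ltW.
Qed.

Lemma p_check_ge0 x z : 0 <= p_check pi x z.
Proof. by rewrite /p_check divr_ge0 // addr_ge0 // expR_ge0. Qed.

Lemma p_check_le1 x z : p_check pi x z <= 1.
Proof. by rewrite /p_check ler_pdivrMr ?mul1r ?lerDl ?expR_ge0. Qed.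

Lemma q_check_ge0 mu x y : (forall z, 0 <= mu z) -> 0 <= q_check pi mu x y.
Proof.
move=> mu_ge0; rewrite /q_check addr_ge0 // mulr_ge0 ?p_check_ge0 //.
by rewrite subr_ge0 p_check_le1.
Qed.

Lemma q_check_le_q_RW mu x y : (forall z, 0 <= mu z) -> (forall z, mu z = mu (- z)) ->
  q_check pi mu x y <= 2 * q_RW mu x y.
Proof.
move=> mu_ge0 mu_sym; rewrite /q_check /q_RW -opprB -mu_sym mulr_natl mulr2n.
apply: lerD; rewrite ler_piMr ?p_check_le1 //.
by rewrite lerBlDr lerDl p_check_ge0.
Qed.

End mh_comparison.

Theorem proposition3p3 (R : realType) (d : nat) (pi mu : 'rV[R]_d -> R) :
  prob_density pi -> (forall x, 0 < pi x) -> C1 (fun x => ln (pi x)) ->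
  prob_density mu -> (forall z, mu z = mu (- z)) ->
  ((2^-1)%:E * Gap pi (mh_kernel pi (q_check pi mu))
     <= Gap pi (mh_kernel pi (q_RW mu)))%E.
Proof.
move=> _ pi_gt0 _ [_ mu_ge0 _] mu_sym.
have qRW_ge0 x y : 0 <= q_RW mu x y by exact: mu_ge0.
have qB_ge0 x y : 0 <= q_check pi mu x y by exact: q_check_ge0.
have densRW_ge0 x y : 0 <= mh_move_density pi (q_RW mu) x y.
  exact: mh_move_density_ge0.
have densB_ge0 x y : 0 <= mh_move_density pi (q_check pi mu) x y.
  exact: mh_move_density_ge0.
have le_dens x y : mh_move_density pi (q_check pi mu) x y
                   <= 2 * mh_move_density pi (q_RW mu) x y.
  by apply: le_mh_move_density => //; exact: q_check_le_q_RW.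
apply: le_Gap => // f _; apply: le_dirichlet => //.
- exact: lebesgue_rV_set0.
- exact: lebesgue_rV_ge0.
- by move=> x; exact: ltW.
- by move=> x; exact: mh_kernel_set0.
- by move=> x; exact: mh_kernel_set0.
- by move=> x A; exact: mh_kernel_ge0.
- by move=> x A; exact: le_mh_kernel.
Qed.
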